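(* For every integer $d \ge 0$, \[ \lambda_\infty^d \;=\; \frac{1}{d!}\cdot\begin{cases} T_d, & d \text{ odd},\\ E_d, & d \text{ even},\end{cases} \] where $\lambda_\infty^d := t_0^d + 2\sum_{j=1}^{r}(-1)^j t_j^d$ with $r=\lfloor d/2\rfloor$ and $t_j^d := N^d\!\left(j+\frac{d+1}{2}\right)$.
   Context: Truncated powers: for $d>0$, $(x-i)_+^d = (x-i)^d$ if $x\ge i$ and $0$ otherwise; $(x-i)_+^0 = 1$ if $x \ge i$ and $0$ if $x<i$. The normalized cardinal B-spline of degree $d$ (with simple knots $0,1,\dots,d+1$) is $N^d(x) = \frac{1}{d!}\sum_{i=0}^{d+1}(-1)^i\binom{d+1}{i}(x-i)_+^d$. The tangent numbers $T_n$ and Euler numbers $E_n$ are defined by $\tan t = \sum_{n\ge 0} T_n \frac{t^n}{n!}$ and $\sec t = \sum_{n\ge0} E_n\frac{t^n}{n!}$. *)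

From Stdlib Require Import Reals Lra Lia Arith.
Open Scope R_scope.

(* truncated power (x - i)_+^d ; for d = 0 this is 1 if x >= i and 0 otherwise *)
Definition tpow (x : R) (i d : nat) : R :=
  if Rle_dec (INR i) x then (x - INR i) ^ d else 0.

(* normalized cardinal B-spline of degree d with knots 0,1,...,d+1 *)
Definition Bspl (d : nat) (x : R) : R :=
  / INR (fact d) *
  sum_f_R0 (fun i => (-1) ^ i * C (S d) i * tpow x i d) (S d).

Fixpoint sum_1_to (f : nat -> R) (r : nat) : R :=
  match r with
  | O => 0
  | S k => sum_1_to f k + f (S k)
  end.

Definition tcoef (d j : nat) : R := Bspl d (INR j + (INR d + 1) / 2).

Definition lambda_inf (d : nat) : R :=
  tcoef d 0 + 2 * sum_1_to (fun j => (-1) ^ j * tcoef d j) (Nat.div2 d).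

Definition is_tangent_numbers (T : nat -> R) : Prop :=
  exists rho, 0 < rho /\ forall t, Rabs t < rho ->
    infinite_sum (fun n => T n * t ^ n / INR (fact n)) (tan t).

Definition is_euler_numbers (E : nat -> R) : Prop :=
  exists rho, 0 < rho /\ forall t, Rabs t < rho ->
    infinite_sum (fun n => E n * t ^ n / INR (fact n)) (/ cos t).

(* For [0 <= x < 1] the alternating sum [E_d(x) = sum_(k <= d) (-1)^k N^d(x + k)] is a
   polynomial in [x] (the exponential Euler spline).  It satisfies
   [E_d(y) + E_d(y + 1) = 2^(d+1) y^d / d!] and the Taylor rule
   [E_d(x + h) = sum_l (2h)^l / l! * E_(d-l)(x)], because the [d]-th difference of a
   polynomial of degree [< d] vanishes.  Folding [lambda_inf d] with the symmetry of [N^d]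
   gives [lambda_inf d = +/- E_d(1/2)] for even [d] and [+/- E_d(0)] for odd [d].  The two
   rules at [h = +/- 1/2] then show that the Cauchy product of [lambda_inf] with the Taylor
   coefficients of [cos] equals those of [1] at even and of [sin] at odd indices, i.e. the
   coefficient form of [sec * cos = 1] and [tan * cos = sin].  As [cos] has no odd terms,
   these triangular systems determine a sequence parity by parity, and uniqueness of power
   series coefficients identifies the solutions with [E_n / n!] and [T_n / n!]. *)

From Stdlib Require Import Reals Lra Lia Arith.
From Coquelicot Require Import Rbar Hierarchy Series PSeries Derive.
Open Scope R_scope.

Lemma sum_front (f : nat -> R) n :
  sum_f_R0 f (S n) = f 0%nat + sum_f_R0 (fun i => f (S i)) n.
Proof. rewrite decomp_sum by lia. reflexivity. Qed.

Lemma sum_scal_l (f : nat -> R) c n :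
  sum_f_R0 (fun i => c * f i) n = c * sum_f_R0 f n.
Proof. rewrite scal_sum. apply sum_eq. intros. ring. Qed.

Lemma sum_swap (f : nat -> nat -> R) n m :
  sum_f_R0 (fun i => sum_f_R0 (fun j => f i j) m) n =
  sum_f_R0 (fun j => sum_f_R0 (fun i => f i j) n) m.
Proof.
  induction n as [|n IH]; [reflexivity|].
  rewrite tech5, IH, <- sum_plus. apply sum_eq. intros. rewrite tech5. reflexivity.
Qed.

Lemma sum_rev (f : nat -> R) n :
  sum_f_R0 f n = sum_f_R0 (fun i => f (n - i)%nat) n.
Proof.
  induction n as [|n IH]; [reflexivity|].
  rewrite tech5, IH, (sum_front (fun i => f (S n - i)%nat)), Nat.sub_0_r, Rplus_comm.
  reflexivity.
Qed.

Lemma sum_zero_tail (f : nat -> R) k n :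
  (k <= n)%nat -> (forall i, (k < i <= n)%nat -> f i = 0) ->
  sum_f_R0 f n = sum_f_R0 f k.
Proof.
  intros Hk Hf. induction n as [|n IH].
  - replace k with 0%nat by lia. reflexivity.
  - destruct (Nat.eq_dec k (S n)) as [->|Hne]; [reflexivity|].
    rewrite tech5, Hf, IH by (lia || (intros; apply Hf; lia)). ring.
Qed.

Lemma sum_alt_shift (a : nat -> R) n :
  sum_f_R0 (fun k => (-1) ^ k * a (S k)) n =
  a 0%nat - sum_f_R0 (fun k => (-1) ^ k * a k) (S n).
Proof.
  rewrite sum_front.
  rewrite (sum_eq (fun k => (-1) ^ S k * a (S k)) (fun k => -1 * ((-1) ^ k * a (S k))))
    by (intros; simpl; ring).
  rewrite sum_scal_l. simpl. ring.
Qed.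

Lemma neg1_pow_sq n : (-1) ^ n * (-1) ^ n = 1.
Proof. rewrite <- Rpow_mult_distr. replace (-1 * -1) with 1 by ring. apply pow1. Qed.

Lemma neg1_pow_add_double a j : (-1) ^ (a + 2 * j) = (-1) ^ a.
Proof. rewrite pow_add, pow_1_even. ring. Qed.

Lemma neg1_pow_sub n i : (i <= n)%nat -> (-1) ^ (n - i) = (-1) ^ n * (-1) ^ i.
Proof.
  intros Hi. replace n with (n - i + i)%nat at 2 by lia.
  rewrite pow_add, Rmult_assoc, neg1_pow_sq. ring.
Qed.

(** * Binomial coefficients and finite differences *)

(* Real binomial coefficients through Pascal's rule; unlike [C n k] they vanish for [k > n]. *)
Fixpoint binom (n k : nat) : R :=
  match n, k with
  | _, O => 1
  | O, S _ => 0
  | S n', S k' => binom n' k' + binom n' (S k')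
  end.

Lemma binom_n0 n : binom n 0 = 1.
Proof. destruct n; reflexivity. Qed.

Lemma binom_gt n k : (n < k)%nat -> binom n k = 0.
Proof.
  revert k; induction n as [|n IH]; intros [|k] Hk; try lia; [reflexivity|].
  simpl. rewrite !IH by lia. ring.
Qed.

Lemma C_n0 n : C n 0 = 1.
Proof. unfold C. rewrite Nat.sub_0_r. simpl. field. apply INR_fact_neq_0. Qed.

Lemma C_nn n : C n n = 1.
Proof. rewrite pascal_step1, Nat.sub_diag by lia. apply C_n0. Qed.

Lemma binom_C n k : (k <= n)%nat -> binom n k = C n k.
Proof.
  revert k; induction n as [|n IH]; intros [|k] Hk; try lia.
  1-2: symmetry; apply C_n0.
  simpl. destruct (Nat.eq_dec k n) as [->|Hne].
  - rewrite (binom_gt n (S n)), IH, !C_nn by lia. ring.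
  - rewrite !IH by lia. apply pascal. lia.
Qed.

Lemma binom_sum n : sum_f_R0 (binom n) n = 2 ^ n.
Proof.
  replace 2 with (1 + 1) by ring. rewrite binomial.
  apply sum_eq. intros i Hi. rewrite binom_C, !pow1 by lia. ring.
Qed.

Lemma binom_diff_step (g : nat -> R) n :
  sum_f_R0 (fun i => (-1) ^ i * binom (S n) i * g i) (S n) =
  sum_f_R0 (fun i => (-1) ^ i * binom n i * (g i - g (S i))) n.
Proof.
  assert (Hshift : sum_f_R0 (fun i => (-1) ^ i * (binom n (S i) * g (S i))) n =
                   g 0%nat - sum_f_R0 (fun i => (-1) ^ i * (binom n i * g i)) n).
  { rewrite (sum_alt_shift (fun k => binom n k * g k)), tech5, (binom_gt n (S n)), binom_n0
      by lia.
    ring. }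
  rewrite sum_front. simpl binom.
  rewrite (sum_eq (fun i => (-1) ^ S i * (binom n i + binom n (S i)) * g (S i))
    (fun i => -1 * ((-1) ^ i * binom n i * g (S i)) + -1 * ((-1) ^ i * (binom n (S i) * g (S i)))))
    by (intros; simpl; ring).
  rewrite (sum_eq (fun i => (-1) ^ i * binom n i * (g i - g (S i)))
    (fun i => (-1) ^ i * (binom n i * g i) + -1 * ((-1) ^ i * binom n i * g (S i))))
    by (intros; ring).
  rewrite !sum_plus, !sum_scal_l, Hshift. simpl. ring.
Qed.

Lemma pow_succ_diff (w : R) e :
  (w + 1) ^ S e - w ^ S e = sum_f_R0 (fun l => C (S e) l * w ^ l) e.
Proof.
  rewrite binomial, tech5, C_nn, Nat.sub_diag.
  rewrite (sum_eq _ (fun l => C (S e) l * w ^ l)) by (intros; rewrite pow1; ring).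
  simpl. ring.
Qed.

Lemma alt_binom_sum_pow n : forall e z, (e < n)%nat ->
  sum_f_R0 (fun i => (-1) ^ i * binom n i * (z - INR i) ^ e) n = 0.
Proof.
  induction n as [|n IH]; intros e z He; [lia|].
  rewrite (binom_diff_step (fun i => (z - INR i) ^ e)).
  destruct e as [|e].
  { apply sum_eq_R0. intros. simpl. ring. }
  rewrite (sum_eq _ (fun i => sum_f_R0 (fun l =>
      C (S e) l * ((-1) ^ i * binom n i * (z - 1 - INR i) ^ l)) e)).
  - rewrite sum_swap. apply sum_eq_R0. intros l Hl.
    rewrite sum_scal_l, IH by lia. ring.
  - intros i _.
    rewrite (sum_eq _ (fun l => (-1) ^ i * binom n i * (C (S e) l * (z - 1 - INR i) ^ l)))
      by (intros; ring).
    rewrite sum_scal_l, <- pow_succ_diff, S_INR.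
    replace (z - 1 - INR i + 1) with (z - INR i) by ring.
    replace (z - (INR i + 1)) with (z - 1 - INR i) by ring. reflexivity.
Qed.

(** * The exponential Euler spline *)

(* On [0 <= x < 1], [piece d d k x] is [Bspl d (k + x)]; the extra parameters let the
   number of differences [S D] and the degree [e] vary independently. *)
Definition piece (D e k : nat) (x : R) : R :=
  sum_f_R0 (fun i => (-1) ^ i * binom (S D) i * (x + INR k - INR i) ^ e / INR (fact e)) k.

Definition alt_pieces (D e : nat) (x : R) : R :=
  sum_f_R0 (fun k => (-1) ^ k * piece D e k x) D.

Definition euler_spline (d : nat) : R -> R := alt_pieces d d.

Lemma piece_last D e x : (e <= D)%nat -> piece D e (S D) x = 0.
Proof.
  intros He. unfold piece.
  rewrite (sum_eq _ (fun i => / INR (fact e) *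
    ((-1) ^ i * binom (S D) i * (x + INR (S D) - INR i) ^ e))) by (intros; unfold Rdiv; ring).
  rewrite sum_scal_l, alt_binom_sum_pow by lia. ring.
Qed.

Lemma piece_S D e k x : piece (S D) e (S k) x = piece D e (S k) x - piece D e k x.
Proof.
  unfold piece. rewrite !sum_front, !binom_n0.
  rewrite (sum_eq
    (fun i => (-1) ^ S i * binom (S (S D)) (S i) * (x + INR (S k) - INR (S i)) ^ e / INR (fact e))
    (fun i => (-1) ^ S i * binom (S D) (S i) * (x + INR (S k) - INR (S i)) ^ e / INR (fact e)
              + -1 * ((-1) ^ i * binom (S D) i * (x + INR k - INR i) ^ e / INR (fact e)))).
  - rewrite sum_plus, sum_scal_l. ring.
  - intros i _. simpl binom.
    replace (x + INR (S k) - INR (S i)) with (x + INR k - INR i) by (rewrite !S_INR; ring).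
    simpl. unfold Rdiv. ring.
Qed.

Lemma alt_pieces_S D e x : (e <= D)%nat -> alt_pieces (S D) e x = 2 * alt_pieces D e x.
Proof.
  intros He. unfold alt_pieces.
  rewrite sum_front.
  rewrite (sum_eq (fun i => (-1) ^ S i * piece (S D) e (S i) x)
    (fun i => (-1) ^ i * piece D e i x + -1 * ((-1) ^ i * piece D e (S i) x)))
    by (intros; rewrite piece_S; simpl; ring).
  rewrite sum_plus, sum_scal_l, (sum_alt_shift (fun k => piece D e k x)), tech5, piece_last
    by lia.
  change (piece (S D) e 0 x) with (piece D e 0 x). simpl. ring.
Qed.

Lemma alt_pieces_add m e x : alt_pieces (e + m) e x = 2 ^ m * euler_spline e x.
Proof.
  induction m as [|m IH].
  - rewrite Nat.add_0_r. unfold euler_spline. ring.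
  - rewrite Nat.add_succ_r, alt_pieces_S, IH by lia. simpl. ring.
Qed.

Lemma pow_add_div_fact h w d :
  (h + w) ^ d / INR (fact d) =
  sum_f_R0 (fun l => h ^ l / INR (fact l) * (w ^ (d - l) / INR (fact (d - l)))) d.
Proof.
  rewrite binomial. unfold Rdiv. rewrite Rmult_comm, <- sum_scal_l.
  apply sum_eq. intros l Hl. unfold C. field. repeat split; apply INR_fact_neq_0.
Qed.

Lemma piece_add D d k x h :
  piece D d k (x + h) = sum_f_R0 (fun l => h ^ l / INR (fact l) * piece D (d - l) k x) d.
Proof.
  unfold piece.
  rewrite (sum_eq _ (fun i => sum_f_R0 (fun l => h ^ l / INR (fact l) *
     ((-1) ^ i * binom (S D) i * (x + INR k - INR i) ^ (d - l) / INR (fact (d - l)))) d)).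
  - rewrite sum_swap. apply sum_eq. intros. apply sum_scal_l.
  - intros i _. unfold Rdiv at 1. rewrite Rmult_assoc.
    replace (x + h + INR k - INR i) with (h + (x + INR k - INR i)) by ring.
    fold (Rdiv ((h + (x + INR k - INR i)) ^ d) (INR (fact d))).
    rewrite pow_add_div_fact, <- sum_scal_l. apply sum_eq. intros. unfold Rdiv. ring.
Qed.

Lemma euler_spline_taylor d x h :
  euler_spline d (x + h) =
  sum_f_R0 (fun l => (2 * h) ^ l / INR (fact l) * euler_spline (d - l) x) d.
Proof.
  unfold euler_spline at 1, alt_pieces.
  rewrite (sum_eq _ (fun k => sum_f_R0 (fun l =>
     h ^ l / INR (fact l) * ((-1) ^ k * piece d (d - l) k x)) d))
    by (intros; rewrite piece_add, <- sum_scal_l; apply sum_eq; intros; ring).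
  rewrite sum_swap. apply sum_eq. intros l Hl.
  rewrite sum_scal_l. fold (alt_pieces d (d - l) x).
  replace d with (d - l + l)%nat at 1 by lia.
  rewrite alt_pieces_add, Rpow_mult_distr. unfold Rdiv. ring.
Qed.

Lemma piece_shift1 D e k y :
  piece D e k (y + 1) =
  piece D e (S k) y - (-1) ^ S k * binom (S D) (S k) * y ^ e / INR (fact e).
Proof.
  unfold piece. rewrite tech5, !S_INR.
  replace (y + (INR k + 1) - (INR k + 1)) with y by ring.
  rewrite Rplus_minus_r. apply sum_eq. intros i _.
  now replace (y + 1 + INR k) with (y + (INR k + 1)) by ring.
Qed.

Lemma euler_spline_shift1 d y :
  euler_spline d y + euler_spline d (y + 1) = 2 ^ S d * y ^ d / INR (fact d).
Proof.
  assert (Hbinom : sum_f_R0 (fun k => binom (S d) (S k)) d = 2 ^ S d - 1).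
  { pose proof (binom_sum (S d)) as Hs. rewrite sum_front, binom_n0 in Hs. lra. }
  assert (Hpiece0 : piece d d 0 y = y ^ d / INR (fact d)).
  { unfold piece. simpl. replace (y + 0 - 0) with y by ring. unfold Rdiv. ring. }
  unfold euler_spline, alt_pieces at 2.
  rewrite (sum_eq _ (fun k => (-1) ^ k * piece d d (S k) y +
                              y ^ d / INR (fact d) * binom (S d) (S k))).
  - rewrite sum_plus, sum_scal_l, Hbinom, (sum_alt_shift (fun k => piece d d k y)), tech5,
      piece_last, Hpiece0 by lia.
    fold (alt_pieces d d y). simpl. field. apply INR_fact_neq_0.
  - intros k _. rewrite piece_shift1. change ((-1) ^ S k) with (-1 * (-1) ^ k).
    transitivity ((-1) ^ k * piece d d (S k) y +
      ((-1) ^ k * (-1) ^ k) * (y ^ d / INR (fact d) * binom (S d) (S k))); [unfold Rdiv; ring|].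
    rewrite neg1_pow_sq. ring.
Qed.

(** * Pieces and symmetry of the cardinal B-spline *)

Lemma Bspl_piece d k x : (k <= d)%nat -> 0 <= x < 1 -> Bspl d (INR k + x) = piece d d k x.
Proof.
  intros Hk Hx. unfold Bspl, piece.
  rewrite (sum_zero_tail _ k (S d)); [| lia |].
  - rewrite <- sum_scal_l. apply sum_eq. intros i Hi. unfold tpow.
    destruct (Rle_dec (INR i) (INR k + x)) as [Hle|Hlt].
    + rewrite binom_C by lia.
      replace (INR k + x - INR i) with (x + INR k - INR i) by ring. unfold Rdiv. ring.
    + exfalso. apply Hlt. assert (INR i <= INR k) by (apply le_INR; lia). lra.
  - intros i Hi. unfold tpow.
    destruct (Rle_dec (INR i) (INR k + x)) as [Hle|]; [|ring].
    assert (INR k + 1 <= INR i) by (rewrite <- S_INR; apply le_INR; lia). lra.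
Qed.

Lemma tpow_reflect_term d X i : (1 <= d)%nat -> (i <= S d)%nat ->
  (-1) ^ i * C (S d) i * tpow X i d -
  (-1) ^ (S d - i) * C (S d) (S d - i) * tpow (INR (S d) - X) (S d - i) d =
  (-1) ^ i * binom (S d) i * (X - INR i) ^ d.
Proof.
  intros Hd Hi. rewrite <- pascal_step1, binom_C, neg1_pow_sub by lia.
  unfold tpow. rewrite minus_INR by lia. change ((-1) ^ S d) with (-1 * (-1) ^ d).
  destruct (Rle_dec (INR i) X) as [H1|H1];
  destruct (Rle_dec (INR (S d) - INR i) (INR (S d) - X)) as [H2|H2].
  - assert (X = INR i) by lra. subst X.
    replace (INR (S d) - INR i - (INR (S d) - INR i)) with 0 by ring.
    rewrite Rminus_diag, pow_i by lia. ring.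
  - ring.
  - replace (INR (S d) - X - (INR (S d) - INR i)) with (-1 * (X - INR i)) by ring.
    rewrite Rpow_mult_distr.
    transitivity ((-1) ^ i * C (S d) i * (X - INR i) ^ d * ((-1) ^ d * (-1) ^ d)); [ring|].
    rewrite neg1_pow_sq. ring.
  - lra.
Qed.

Lemma Bspl_reflect d X : (1 <= d)%nat -> Bspl d X = Bspl d (INR (S d) - X).
Proof.
  intros Hd. unfold Bspl. apply Rminus_diag_uniq.
  rewrite <- Rmult_minus_distr_l.
  rewrite (sum_rev (fun i => (-1) ^ i * C (S d) i * tpow (INR (S d) - X) i d)), <- minus_sum.
  rewrite (sum_eq _ (fun i => (-1) ^ i * binom (S d) i * (X - INR i) ^ d))
    by (intros; apply tpow_reflect_term; lia).
  rewrite alt_binom_sum_pow by lia. ring.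
Qed.

(** * [lambda_inf] as a value of the Euler spline *)

Lemma sum_1_to_ext (f g : nat -> R) r :
  (forall j, (1 <= j <= r)%nat -> f j = g j) -> sum_1_to f r = sum_1_to g r.
Proof.
  induction r as [|r IH]; intros Hfg; simpl; [reflexivity|].
  rewrite IH, Hfg by (lia || (intros; apply Hfg; lia)). reflexivity.
Qed.

Lemma sum_1_to_scal (f : nat -> R) c r : sum_1_to (fun j => c * f j) r = c * sum_1_to f r.
Proof. induction r as [|r IH]; simpl; [|rewrite IH]; ring. Qed.

Lemma sum_fold_center (w : nat -> R) r : forall a,
  sum_f_R0 (fun m => w (a + m)%nat) (2 * r) =
  w (a + r)%nat + sum_1_to (fun j => w (a + r + j)%nat + w (a + r - j)%nat) r.
Proof.
  induction r as [|r IH]; intros a.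
  - simpl. rewrite !Nat.add_0_r. ring.
  - replace (2 * S r)%nat with (S (S (2 * r))) by lia.
    rewrite tech5, sum_front,
      (sum_eq (fun i => w (a + S i)%nat) (fun m => w (S a + m)%nat)) by (intros; f_equal; lia).
    rewrite IH. simpl sum_1_to.
    rewrite (sum_1_to_ext (fun j => w (S a + r + j)%nat + w (S a + r - j)%nat)
                          (fun j => w (a + S r + j)%nat + w (a + S r - j)%nat))
      by (intros; f_equal; f_equal; lia).
    replace (S a + r)%nat with (a + S r)%nat by lia.
    replace (a + S (S (2 * r)))%nat with (a + S r + S r)%nat by lia.
    replace (a + S r - S r)%nat with a by lia. rewrite Nat.add_0_r. ring.
Qed.

(* Symmetry of [Bspl d] about [(d + 1) / 2] pairs the nodes [a + r - j] and [a + r + j]. *)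
Lemma alt_Bspl_sum_center d a r x0 :
  (a <= 1)%nat -> d = (a + 2 * r)%nat -> INR a + 2 * x0 = 1 ->
  sum_f_R0 (fun m => (-1) ^ (a + m) * Bspl d (INR (a + m) + x0)) (2 * r) =
  (-1) ^ (a + r) * lambda_inf d.
Proof.
  intros Ha Hd Hx0.
  set (w k := (-1) ^ k * Bspl d (INR k + x0)).
  assert (Ht : forall j, tcoef d j = Bspl d (INR (a + r + j) + x0)).
  { intros j. unfold tcoef. f_equal. subst d. rewrite !plus_INR, mult_INR. simpl. lra. }
  assert (Hpair : forall j, (1 <= j <= r)%nat ->
     w (a + r + j)%nat + w (a + r - j)%nat = (-1) ^ (a + r) * (2 * ((-1) ^ j * tcoef d j))).
  { intros j Hj. unfold w. rewrite Ht, (Bspl_reflect d (INR (a + r - j) + x0)) by lia.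
    replace (INR (S d) - (INR (a + r - j) + x0)) with (INR (a + r + j) + x0)
      by (rewrite minus_INR by lia; subst d; rewrite !S_INR, !plus_INR, mult_INR; simpl; lra).
    replace (a + r + j)%nat with (a + r - j + 2 * j)%nat at 1 by lia.
    rewrite neg1_pow_add_double, <- (neg1_pow_add_double (a + r - j) j).
    replace (a + r - j + 2 * j)%nat with (a + r + j)%nat by lia.
    rewrite pow_add. ring. }
  change (sum_f_R0 (fun m => w (a + m)%nat) (2 * r) = (-1) ^ (a + r) * lambda_inf d).
  rewrite sum_fold_center, (sum_1_to_ext _ _ r Hpair), !sum_1_to_scal.
  unfold lambda_inf. replace (Nat.div2 d) with r.
  - unfold w. rewrite Ht, Nat.add_0_r. ring.
  - subst d. destruct a as [|[|]]; try lia.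
    + symmetry. apply Nat.div2_double.
    + symmetry. apply Nat.div2_succ_double.
Qed.

Lemma euler_spline_Bspl d x : 0 <= x < 1 ->
  euler_spline d x = sum_f_R0 (fun k => (-1) ^ k * Bspl d (INR k + x)) d.
Proof.
  intros Hx. apply sum_eq. intros k Hk. rewrite Bspl_piece by (lia || lra). reflexivity.
Qed.

Lemma lambda_inf_euler_spline m :
  lambda_inf m = (-1) ^ Nat.div2 (S m) * euler_spline m (if Nat.even m then / 2 else 0).
Proof.
  destruct (Nat.Even_or_Odd m) as [[r ->]|[r ->]].
  - rewrite Nat.even_even, Nat.div2_succ_double.
    rewrite euler_spline_Bspl, (alt_Bspl_sum_center (2 * r) 0 r) by (simpl; lra || lia).
    rewrite <- Rmult_assoc, neg1_pow_sq. ring.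
  - rewrite Nat.even_odd, euler_spline_Bspl, Nat.add_1_r, sum_front by lra.
    change (Nat.div2 (S (S (2 * r)))) with (S (Nat.div2 (2 * r))). rewrite Nat.div2_double.
    assert (Hfirst : Bspl (S (2 * r)) (INR 0 + 0) = 0).
    { rewrite Bspl_piece by (lia || lra). unfold piece. simpl. unfold Rdiv. ring. }
    rewrite Hfirst, Rmult_0_r, Rplus_0_l.
    rewrite (alt_Bspl_sum_center (S (2 * r)) 1 r) by (simpl; lra || lia).
    rewrite <- Rmult_assoc, neg1_pow_sq. ring.
Qed.

(** * Convolution of [lambda_inf] with the cosine coefficients *)

Definition cos_coef (n : nat) : R := if Nat.even n then cos_n (Nat.div2 n) else 0.
Definition sin_coef (n : nat) : R := if Nat.even n then 0 else sin_n (Nat.div2 n).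

Lemma cos_coef_even a : cos_coef (2 * a) = (-1) ^ a / INR (fact (2 * a)).
Proof. unfold cos_coef. rewrite Nat.even_even, Nat.div2_double. reflexivity. Qed.

Lemma cos_coef_odd a : cos_coef (2 * a + 1) = 0.
Proof. unfold cos_coef. rewrite Nat.even_odd. reflexivity. Qed.

Lemma even_sub_double n a : (2 * a <= n)%nat -> Nat.even (n - 2 * a) = Nat.even n.
Proof. intros Ha. rewrite Nat.even_sub, Nat.even_even by exact Ha. now destruct (Nat.even n). Qed.

Lemma neg1_pow_div2_sub_double n a : (2 * a <= n)%nat ->
  (-1) ^ Nat.div2 (S n) = (-1) ^ Nat.div2 (S (n - 2 * a)) * (-1) ^ a.
Proof.
  intros Ha. rewrite <- pow_add, !Nat.div2_div. f_equal.
  replace (S n) with (S (n - 2 * a) + a * 2)%nat by lia. apply Nat.div_add. lia.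
Qed.

Lemma PS_mult_lambda_inf_cos n :
  let x := if Nat.even n then / 2 else 0 in
  PS_mult lambda_inf cos_coef n =
  (-1) ^ Nat.div2 (S n) / 2 * (euler_spline n (x + / 2) + euler_spline n (x - / 2)).
Proof.
  intros x. unfold PS_mult. rewrite sum_rev.
  rewrite (sum_eq _ (fun l => (-1) ^ Nat.div2 (S n) / 2 *
    ((2 * / 2) ^ l / INR (fact l) * euler_spline (n - l) x +
     (2 * - / 2) ^ l / INR (fact l) * euler_spline (n - l) x))).
  - rewrite sum_scal_l, sum_plus, <- !euler_spline_taylor. reflexivity.
  - intros l Hl. replace (n - (n - l))%nat with l by lia.
    replace (2 * / 2) with 1 by field. replace (2 * - / 2) with (-1) by field. rewrite pow1.
    destruct (Nat.Even_or_Odd l) as [[a ->]|[a ->]].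
    + rewrite cos_coef_even, lambda_inf_euler_spline, even_sub_double, pow_1_even,
        (neg1_pow_div2_sub_double n a) by lia.
      fold x. field. apply INR_fact_neq_0.
    + rewrite cos_coef_odd, pow_add, pow_1_even. field. apply INR_fact_neq_0.
Qed.

Lemma PS_mult_lambda_inf_cos_even b : PS_mult lambda_inf cos_coef (2 * b) = 0 ^ (2 * b).
Proof.
  rewrite PS_mult_lambda_inf_cos, Nat.even_even.
  replace (/ 2 + / 2) with (0 + 1) by field. replace (/ 2 - / 2) with 0 by field.
  rewrite Rplus_comm, euler_spline_shift1, Nat.div2_succ_double.
  destruct b as [|b].
  - simpl. field.
  - rewrite pow_i by lia. unfold Rdiv. ring.
Qed.

Lemma PS_mult_lambda_inf_cos_odd b :
  PS_mult lambda_inf cos_coef (2 * b + 1) = sin_coef (2 * b + 1).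
Proof.
  rewrite PS_mult_lambda_inf_cos, Nat.even_odd.
  unfold sin_coef, sin_n. rewrite Nat.even_odd, Nat.div2_odd'.
  replace (0 + / 2) with (- / 2 + 1) by field. replace (0 - / 2) with (- / 2) by field.
  rewrite Rplus_comm, euler_spline_shift1.
  replace (Nat.div2 (S (2 * b + 1))) with (S b)
    by (replace (S (2 * b + 1)) with (2 * S b)%nat by lia; symmetry; apply Nat.div2_double).
  set (n := (2 * b + 1)%nat).
  replace (- / 2) with (-1 * / 2) by field.
  rewrite Rpow_mult_distr, pow_inv, <- !tech_pow_Rmult.
  replace ((-1) ^ n) with (-1) by (unfold n; rewrite pow_add, pow_1_even; ring).
  field. split; [apply INR_fact_neq_0 | apply pow_nonzero; lra].
Qed.

(** * Identifying power series coefficients *)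

Lemma infinite_sum_const_partial (f : nat -> R) l :
  (forall N, sum_f_R0 f N = l) -> infinite_sum f l.
Proof.
  intros Hf eps Heps. exists 0%nat. intros N _. unfold R_dist.
  rewrite Hf, Rminus_diag, Rabs_R0. exact Heps.
Qed.

Lemma is_pseries_zero x : is_pseries (fun _ => 0) x 0.
Proof.
  apply is_pseries_Reals, infinite_sum_const_partial. intros N.
  apply sum_eq_R0. intros. ring.
Qed.

Lemma is_pseries_egf (A : nat -> R) (F : R -> R) rho :
  (forall t, Rabs t < rho -> infinite_sum (fun n => A n * t ^ n / INR (fact n)) (F t)) ->
  forall t, Rabs t < rho -> is_pseries (fun n => A n / INR (fact n)) t (F t).
Proof.
  intros HA t Ht. apply is_pseries_R.
  apply (is_series_ext (fun n => A n * t ^ n / INR (fact n))).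
  - intros n. change (A n * t ^ n / INR (fact n) = A n / INR (fact n) * t ^ n).
    unfold Rdiv. ring.
  - apply is_series_Reals, HA, Ht.
Qed.

Lemma is_pseries_one t : is_pseries (fun n => 0 ^ n) t 1.
Proof.
  apply is_pseries_Reals, infinite_sum_const_partial. intros N.
  induction N as [|N IH]; simpl; [|rewrite IH]; ring.
Qed.

Lemma is_pseries_cos_coef t : is_pseries cos_coef t (cos t).
Proof.
  replace (cos t) with (cos t + t * 0) by ring. apply is_pseries_odd_even.
  - apply (is_pseries_ext cos_n).
    + intros n. unfold cos_coef. rewrite Nat.even_even, Nat.div2_double. reflexivity.
    + unfold cos. destruct (exist_cos (Rsqr t)) as [l Hl].
      rewrite <- Rsqr_pow2. apply is_pseries_Reals. exact Hl.
  - apply (is_pseries_ext (fun _ => 0)); [|apply is_pseries_zero].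
    intros n. symmetry. apply cos_coef_odd.
Qed.

Lemma is_pseries_sin_coef t : is_pseries sin_coef t (sin t).
Proof.
  unfold sin. destruct (exist_sin (Rsqr t)) as [l Hl].
  replace (t * l) with (0 + t * l) by ring. apply is_pseries_odd_even.
  - apply (is_pseries_ext (fun _ => 0)); [|apply is_pseries_zero].
    intros n. unfold sin_coef. rewrite Nat.even_even. reflexivity.
  - apply (is_pseries_ext sin_n).
    + intros n. unfold sin_coef. rewrite Nat.even_odd, Nat.div2_odd'. reflexivity.
    + rewrite <- Rsqr_pow2. apply is_pseries_Reals. exact Hl.
Qed.

Lemma CV_radius_gt (a : nat -> R) rho :
  (forall t, Rabs t < rho -> ex_series (fun n => a n * t ^ n)) ->
  forall x, Rabs x < rho -> Rbar_lt (Rabs x) (CV_radius a).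
Proof.
  intros Hex x Hx.
  destruct (Rbar_lt_dec (Rabs x) (CV_radius a)) as [Hlt|Hge]; [exact Hlt|].
  exfalso. apply Rbar_not_lt_le in Hge.
  set (y := (Rabs x + rho) / 2).
  assert (Hy : Rabs x < y < rho) by (unfold y; lra).
  apply (CV_disk_outside a y).
  - eapply Rbar_le_lt_trans; [exact Hge|]. simpl.
    rewrite (Rabs_pos_eq y); pose proof (Rabs_pos x); lra.
  - apply ex_series_lim_0, Hex. rewrite (Rabs_pos_eq y); pose proof (Rabs_pos x); lra.
Qed.

Lemma is_pseries_CV_radius (a : nat -> R) (F : R -> R) rho :
  (forall t, Rabs t < rho -> is_pseries a t (F t)) ->
  forall x, Rabs x < rho -> Rbar_lt (Rabs x) (CV_radius a).
Proof.
  intros Ha. apply CV_radius_gt. intros t Ht. exists (F t). apply is_pseries_R, Ha, Ht.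
Qed.

Lemma is_pseries_coef_unique (a b : nat -> R) (F : R -> R) rho : 0 < rho ->
  (forall t, Rabs t < rho -> is_pseries a t (F t)) ->
  (forall t, Rabs t < rho -> is_pseries b t (F t)) ->
  forall n, a n = b n.
Proof.
  intros Hrho Ha Hb n.
  assert (H0 : Rabs 0 < rho) by (rewrite Rabs_R0; exact Hrho).
  pose proof (is_pseries_CV_radius a F rho Ha 0 H0) as Ra.
  pose proof (is_pseries_CV_radius b F rho Hb 0 H0) as Rb.
  rewrite Rabs_R0 in Ra, Rb.
  pose proof (Derive_n_coef a n Ra) as Hda. pose proof (Derive_n_coef b n Rb) as Hdb.
  assert (Hloc : locally 0 (fun t => PSeries a t = PSeries b t)).
  { exists (mkposreal rho Hrho). intros t Ht.
    change (Rabs (t - 0) < rho) in Ht. rewrite Rminus_0_r in Ht.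
    rewrite (is_pseries_unique a t (F t)), (is_pseries_unique b t (F t)); auto. }
  rewrite (Derive_n_ext_loc _ _ n 0 Hloc), Hdb in Hda.
  apply Rmult_eq_reg_r with (INR (fact n)); [symmetry; exact Hda | apply INR_fact_neq_0].
Qed.

Lemma PS_mult_cos_coef (c g : nat -> R) (F G : R -> R) rho : 0 < rho ->
  (forall t, Rabs t < rho -> is_pseries c t (F t)) ->
  (forall t, Rabs t < rho -> is_pseries g t (G t)) ->
  (forall t, Rabs t < rho -> F t * cos t = G t) ->
  forall n, PS_mult c cos_coef n = g n.
Proof.
  intros Hrho Hc Hg HFG.
  apply (is_pseries_coef_unique _ _ G rho Hrho); [|exact Hg].
  intros t Ht. rewrite <- HFG by exact Ht.
  apply is_pseries_mult.
  - apply Hc, Ht.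
  - apply is_pseries_cos_coef.
  - exact (is_pseries_CV_radius c F rho Hc t Ht).
  - apply (is_pseries_CV_radius cos_coef cos (Rabs t + 1)); [|lra].
    intros s _. apply is_pseries_cos_coef.
Qed.

(* Since [cos_coef] vanishes at odd indices, [PS_mult a cos_coef n] only involves the
   values of [a] at indices of the parity of [n]. *)
Lemma PS_mult_cos_coef_inj (a b : nat -> R) (p : bool) :
  (forall n, Nat.even n = p -> PS_mult a cos_coef n = PS_mult b cos_coef n) ->
  forall n, Nat.even n = p -> a n = b n.
Proof.
  intros Hab n. induction n as [n IH] using lt_wf_ind. intros Hn.
  specialize (Hab n Hn). unfold PS_mult in Hab.
  assert (Hc0 : cos_coef 0 = 1) by (unfold cos_coef, cos_n; simpl; field).
  destruct n as [|m].
  - simpl in Hab. rewrite Hc0 in Hab. lra.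
  - rewrite !tech5, Nat.sub_diag, Hc0 in Hab.
    rewrite (sum_eq (fun k => a k * cos_coef (S m - k)) (fun k => b k * cos_coef (S m - k)))
      in Hab; [lra|].
    intros k Hk. destruct (Bool.bool_dec (Nat.even k) p) as [Hkp|Hkp].
    + rewrite IH by (lia || exact Hkp). reflexivity.
    + unfold cos_coef. rewrite Nat.even_sub, Hn by lia.
      destruct p, (Nat.even k); try contradiction; simpl; ring.
Qed.

Lemma cos_pos_small t : Rabs t < 1 -> 0 < cos t.
Proof. intros Ht. apply Rabs_def2 in Ht. pose proof PI2_1. apply cos_gt_0; lra. Qed.

Theorem mainTheorem1 (d : nat) (T E : nat -> R)
  (hT : is_tangent_numbers T) (hE : is_euler_numbers E) :
  lambda_inf d = / INR (fact d) * (if Nat.odd d then T d else E d).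
Proof.
  destruct hE as [rE [HrE HE]], hT as [rT [HrT HT]].
  assert (Hsec : forall n, PS_mult (fun n => E n / INR (fact n)) cos_coef n = 0 ^ n).
  { apply (PS_mult_cos_coef _ _ (fun t => / cos t) (fun _ => 1) (Rmin rE 1)).
    - apply Rmin_pos; lra.
    - intros t Ht. apply (is_pseries_egf E _ rE HE). pose proof (Rmin_l rE 1). lra.
    - intros t _. apply is_pseries_one.
    - intros t Ht. pose proof (cos_pos_small t ltac:(pose proof (Rmin_r rE 1); lra)).
      field. lra. }
  assert (Htan : forall n, PS_mult (fun n => T n / INR (fact n)) cos_coef n = sin_coef n).
  { apply (PS_mult_cos_coef _ _ tan sin (Rmin rT 1)).
    - apply Rmin_pos; lra.
    - intros t Ht. apply (is_pseries_egf T _ rT HT). pose proof (Rmin_l rT 1). lra.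
    - intros t _. apply is_pseries_sin_coef.
    - intros t Ht. pose proof (cos_pos_small t ltac:(pose proof (Rmin_r rT 1); lra)).
      unfold tan. field. lra. }
  unfold Nat.odd. destruct (Nat.even d) eqn:Hd; simpl.
  - assert (Hd' : lambda_inf d = E d / INR (fact d)).
    { apply (PS_mult_cos_coef_inj _ (fun n => E n / INR (fact n)) true); [|exact Hd].
      intros n Hn. apply Nat.even_spec in Hn as [b ->].
      rewrite Hsec. apply PS_mult_lambda_inf_cos_even. }
    rewrite Hd'. field. apply INR_fact_neq_0.
  - assert (Hd' : lambda_inf d = T d / INR (fact d)).
    { apply (PS_mult_cos_coef_inj _ (fun n => T n / INR (fact n)) false); [|exact Hd].
      intros n Hn. destruct (proj1 (Nat.odd_spec n)) as [b ->].
      { unfold Nat.odd. rewrite Hn. reflexivity. }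
      rewrite Htan. apply PS_mult_lambda_inf_cos_odd. }
    rewrite Hd'. field. apply INR_fact_neq_0.
Qed.
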